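(* Let $k$ be a positive integer and $y>1$ a real number. If $n$ is a $y$-friable positive integer with $n\le y^{(k+1)/2}$, then $n$ can be factored as $n=b_1b_2\cdots b_k$ with positive integers $b_j$ satisfying $b_j\le y$ for each $1\le j\le k$.
   Context: A positive integer $n$ is $y$-friable if every prime factor of $n$ is at most $y$. *)

From Stdlib Require Import Reals ZArith Znumtheory List.
Open Scope R_scope.

Definition friable (y : R) (n : nat) : Prop :=
  (0 < n)%nat /\
  forall p : nat, prime (Z.of_nat p) -> Nat.divide p n -> INR p <= y.

Definition prod_list (l : list nat) : nat := fold_right Nat.mul 1%nat l.

From Stdlib Require Import Reals ZArith Znumtheory List Lia Lra.
Open Scope R_scope.

(* A y-friable n > y has a divisor d with sqrt y < d <= y: n is composite, one
   of its two proper factors exceeds sqrt y (otherwise n <= y), and we descend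
   into it.  Peeling off such a d, or d = 1 once n <= y, turns the bound
   n^2 <= y^(j+1) into m^2 <= y^j for the cofactor m, so after k - 1 steps
   m^2 <= y^2, i.e. m <= y. *)

Lemma friable_divide (y : R) (n m : nat) :
  friable y n -> Nat.divide m n -> friable y m.
Proof.
  intros [Hn Hprimes] [q Hq]. split.
  - destruct m; lia.
  - intros p Hp Hpm. apply Hprimes; [exact Hp|].
    apply Nat.divide_trans with m; [exact Hpm|]. now exists q.
Qed.

Lemma composite_factor (n : nat) :
  (1 < n)%nat -> ~ prime (Z.of_nat n) ->
  exists a b, (1 < a < n)%nat /\ (1 < b < n)%nat /\ n = (a * b)%nat.
Proof.
  intros Hn Hnp.
  destruct (not_prime_divide (Z.of_nat n)) as [z [Hz [q Hq]]]; [lia|exact Hnp|].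
  assert (Hq0 : (0 < q)%Z) by nia.
  exists (Z.to_nat z), (Z.to_nat q).
  assert (Hnat : n = (Z.to_nat z * Z.to_nat q)%nat) by (apply Nat2Z.inj; lia).
  nia.
Qed.

Lemma friable_divisor_above_sqrt (y : R) (n : nat) :
  1 <= y -> friable y n -> y < INR n ^ 2 ->
  exists d, Nat.divide d n /\ y < INR d ^ 2 /\ INR d <= y.
Proof.
  intros Hy. induction n as [n IH] using (well_founded_induction lt_wf).
  intros Hf Hn2.
  destruct (Rle_or_lt (INR n) y) as [Hle|Hgt].
  { exists n. auto using Nat.divide_refl. }
  assert (Hn1 : (1 < n)%nat).
  { destruct Hf as [Hpos _]. destruct (Nat.eq_dec n 1) as [->|]; simpl in Hgt; lra || lia. }
  assert (Hnp : ~ prime (Z.of_nat n)).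
  { intros Hp. destruct Hf as [_ Hprimes].
    specialize (Hprimes n Hp (Nat.divide_refl n)). lra. }
  destruct (composite_factor n Hn1 Hnp) as [a [b [Ha [Hb Hab]]]].
  assert (Hbig : exists c, Nat.divide c n /\ (c < n)%nat /\ y < INR c ^ 2).
  { assert (0 <= INR a) by apply pos_INR. assert (0 <= INR b) by apply pos_INR.
    destruct (Rle_or_lt (INR a ^ 2) y); [destruct (Rle_or_lt (INR b ^ 2) y)|].
    - rewrite Hab, mult_INR in Hgt. nra.
    - exists b. split; [exists a; lia|]. split; [lia|assumption].
    - exists a. split; [exists b; lia|]. split; [lia|assumption]. }
  destruct Hbig as [c [Hcn [Hc Hc2]]].
  destruct (IH c Hc (friable_divide y n c Hf Hcn) Hc2) as [d [Hdc Hd]].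
  exists d. split; [apply Nat.divide_trans with c|]; assumption.
Qed.

Lemma friable_split_off_factor (y Y : R) (n : nat) :
  1 < y -> y ^ 2 <= Y -> friable y n -> INR n ^ 2 <= y * Y ->
  exists d m, n = (d * m)%nat /\ (0 < d)%nat /\ INR d <= y /\
              friable y m /\ INR m ^ 2 <= Y.
Proof.
  intros Hy HY Hf Hn2.
  assert (Hn0 : (0 < n)%nat) by apply Hf.
  destruct (Rle_or_lt (INR n) y) as [Hle|Hgt].
  - assert (0 <= INR n) by apply pos_INR.
    exists 1%nat, n. simpl. repeat (split; [lia || lra || assumption|]). nra.
  - assert (Hn1 : 1 <= INR n) by (apply (le_INR 1); lia).
    destruct (friable_divisor_above_sqrt y n) as [d [[m Hm] [Hd2 Hd]]]; [lra|assumption|nra|].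
    exists d, m. repeat (split; [lia || assumption|]). split.
    + apply friable_divide with n; [assumption|exists d; lia].
    + rewrite Hm, mult_INR in Hn2.
      assert (0 <= INR m) by apply pos_INR. nra.
Qed.

Lemma friable_factorization_pow (y : R) (k n : nat) :
  1 < y -> friable y n -> INR n ^ 2 <= y ^ S (S k) ->
  exists b : list nat,
    length b = S k /\ prod_list b = n /\
    Forall (fun bj => (0 < bj)%nat /\ INR bj <= y) b.
Proof.
  intros Hy. revert n. induction k as [|k IH]; intros n Hf Hn2.
  - assert (0 <= INR n) by apply pos_INR.
    exists (n :: nil). simpl. split; [reflexivity|]. split; [lia|].
    constructor; [|constructor]. split; [apply Hf|]. simpl in Hn2. nra.
  - assert (HY : y ^ 2 <= y ^ S (S k)) by (apply Rle_pow; [lra|lia]).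
    destruct (friable_split_off_factor y (y ^ S (S k)) n)
      as [d [m [Hdm [Hd0 [Hd [Hfm Hm2]]]]]]; [assumption..|].
    destruct (IH m Hfm Hm2) as [b [Hlen [Hprod Hb]]].
    exists (d :: b). simpl. repeat split; auto.
    unfold prod_list in *. simpl. lia.
Qed.

Lemma Rpower_half_sqr (y : R) (m : nat) :
  0 < y -> Rpower y (INR m / 2) ^ 2 = y ^ m.
Proof.
  intros Hy.
  rewrite <- Rpower_pow, Rpower_mult, <- Rpower_pow by (apply exp_pos || lra).
  f_equal. simpl. field.
Qed.

Theorem proposition3p1 (k : nat) (y : R) (n : nat) :
  (0 < k)%nat -> 1 < y ->
  friable y n ->
  INR n <= Rpower y ((INR k + 1) / 2) ->
  exists b : list nat,
    length b = k /\
    prod_list b = n /\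
    Forall (fun bj => (0 < bj)%nat /\ INR bj <= y) b.
Proof.
  intros Hk Hy Hf Hn.
  destruct k as [|k]; [lia|].
  apply friable_factorization_pow; [assumption..|].
  rewrite <- (Rpower_half_sqr y (S (S k))) by lra.
  apply pow_incr. split; [apply pos_INR|].
  replace (INR (S (S k))) with (INR (S k) + 1) by (rewrite (S_INR (S k)); ring).
  exact Hn.
Qed.
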